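(* Let $\epsilon \in (0, 1/2]$ and consider the stochastic process $X_0 = 0$ and, for $t \ge 1$, $X_t = X_{t-1} + x_t - \left(\frac{1}{2} + \epsilon\cdot \mathrm{sgn}(X_{t-1})\right)$, where $x_1, x_2, \ldots$ are independent $\mathrm{Bernoulli}(1/2)$ random variables. Then for every integer $t \ge 0$ and every $\Delta \ge 0$, $\Pr[|X_t| \ge \Delta] \le e^{1/2}\cdot e^{-\epsilon\Delta}$.
   Context: $\mathrm{sgn}(0) = 0$, $\mathrm{sgn}(y)=1$ for $y>0$, $\mathrm{sgn}(y) = -1$ for $y<0$. *)

From HB Require Import structures.
From mathcomp Require Import all_boot all_order all_algebra.
From mathcomp Require Import all_classical all_reals all_analysis.
Set Implicit Arguments. Unset Strict Implicit. Unset Printing Implicit Defensive.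
Import Order.TTheory GRing.Theory Num.Theory.
Local Open Scope ring_scope.

(* The process driven by the coin flips s = [:: x_1; ...; x_t] (x_i in {0,1}):
   X_0 = 0, X_k = X_{k-1} + x_k - (1/2 + eps * sgn X_{k-1}).
   Num.sg is the sign function with sg 0 = 0. *)
Definition Xproc (R : realType) (eps : R) (s : seq bool) : R :=
  foldl (fun X (b : bool) => X + (b : nat)%:R - (2^-1 + eps * Num.sg X)) 0 s.

(* Pr[|X_t| >= Delta] when x_1, ..., x_t are independent Bernoulli(1/2):
   the law of (x_1,...,x_t) is uniform on {0,1}^t = t.-tuple bool. *)
Definition prob_absX_ge (R : realType) (eps : R) (t : nat) (Delta : R) : R :=
  #|[set s : t.-tuple bool | Delta <= `|Xproc eps s|]|%:R
  / #|{: t.-tuple bool}|%:R.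

From mathcomp Require Import all_boot all_order all_algebra.
From mathcomp Require Import all_classical all_reals all_analysis.
From mathcomp Require Import lra ring.
Import Order.TTheory GRing.Theory Num.Theory.
Local Open Scope ring_scope.

(* Let A_t(h) count the coin sequences of length t with |X_t| >= h.  The drift
   always points towards 0, so for h >= 1/2 + eps a sequence reaching
   |X_{t+1}| >= h had |X_t| >= h + eps - 1/2, and both of its one-step
   extensions reach it only if |X_t| >= h + eps + 1/2.  Hence
   A_{t+1}(h) <= A_t(h + eps - 1/2) + A_t(h + eps + 1/2), and induction gives
   A_t(h) <= 2^t e^{1/2 - eps h}: for eps h <= 1/2 this is the trivial bound
   2^t, and the induction step reduces to cosh(eps/2) <= e^{eps^2}. *)

Lemma expR_plus_expRN_le (R : realType) (a : R) :
  expR a + expR (- a) <= 2 * expR (4 * a ^+ 2).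
Proof.
wlog a_ge0 : a / 0 <= a.
  move=> ge0_case; have [/ge0_case //|a_lt0] := leP 0 a.
  by have := ge0_case (- a); rewrite opprK sqrrN addrC; apply; rewrite oppr_ge0 ltW.
rewrite mulr2n mulrDl mul1r.
(* For a >= 1/4 bound each term by e^{4a^2}; otherwise bound e^a and e^{-a}
   through e^{-a} >= 1 - a and e^a >= 1 + a by quadratics. *)
have [a_big|a_small] := lerP (4^-1) a.
  by apply: lerD; rewrite ler_expR; nra.
have ea_ge := expR_ge1Dx a; have eNa_ge := expR_ge1Dx (- a).
have ea_inv : expR a * expR (- a) = 1 by rewrite -expRD subrr expR0.
have ea_gt0 := expR_gt0 a; have eNa_gt0 := expR_gt0 (- a).
have ea_le : expR a <= 1 + a + 2 * a ^+ 2.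
  have : expR a * (1 - a) <= 1 by nra.
  nra.
have eNa_le : expR (- a) <= 1 - a + a ^+ 2.
  have : expR (- a) * (1 + a) <= 1 by nra.
  nra.
have := expR_ge1Dx (4 * a ^+ 2); nra.
Qed.

Lemma leq_nat_of_bool (b1 b2 : bool) : (b1 -> b2) -> (b1 <= b2)%N.
Proof. by case: b1; case: b2 => // /(_ isT). Qed.

Lemma rcons_tuple_bij (T : finType) n :
  bijective (fun p : n.-tuple T * T => [tuple of rcons p.1 p.2]).
Proof.
apply: inj_card_bij; last by rewrite card_prod !card_tuple expnS mulnC.
by move=> [s x] [s' x'] /(congr1 val)/rcons_inj[/val_inj-> ->].
Qed.

Lemma big_tuple_rcons (R : Type) (idx : R) (op : Monoid.com_law idx)
    (T : finType) n (F : n.+1.-tuple T -> R) :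
  \big[op/idx]_(u : n.+1.-tuple T) F u =
  \big[op/idx]_(s : n.-tuple T) \big[op/idx]_(x : T) F [tuple of rcons s x].
Proof.
by rewrite pair_big (reindex _ (onW_bij _ (rcons_tuple_bij T n))).
Qed.

Section Process.
Variables (R : realType) (eps : R).
Implicit Types (x h : R) (t : nat).

Definition stepX (X : R) (b : bool) : R :=
  X + (b : nat)%:R - (2^-1 + eps * Num.sg X).

Lemma Xproc_rcons s b : Xproc eps (rcons s b) = stepX (Xproc eps s) b.
Proof. by rewrite /Xproc foldl_rcons. Qed.

Lemma tail_step_le x h : 0 < eps -> 2^-1 + eps <= h ->
  ((h <= `|stepX x true|)%R + (h <= `|stepX x false|)%R <=
   (h + eps - 2^-1 <= `|x|)%R + (h + eps + 2^-1 <= `|x|)%R)%N.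
Proof.
move=> eps_gt0 h_ge; rewrite /stepX /=.
have [x_lt0|x_gt0|->] := ltgtP x 0;
  [rewrite ltr0_sg // addnC | rewrite gtr0_sg // | rewrite sgr0];
  apply: leq_add; apply: leq_nat_of_bool;
  rewrite !ler_normr => /orP[hX|hX]; apply/orP; first [left; lra | right; lra].
Qed.

Definition tail_count t h : nat :=
  \sum_(s : t.-tuple bool) (h <= `|Xproc eps s|)%R.

Lemma card_tail_set t h :
  #|[set s : t.-tuple bool | h <= `|Xproc eps s|]| = tail_count t h.
Proof.
by rewrite -sum1_card big_mkcond; apply: eq_bigr => s _; rewrite inE; case: ifP.
Qed.

Lemma tail_count_le_pow t h : (tail_count t h <= 2 ^ t)%N.
Proof.
rewrite -card_bool -card_tuple -sum1_card.
by apply: leq_sum => s _; apply: leq_b1.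
Qed.

Lemma tail_count0 h : 0 < h -> tail_count 0 h = 0%N.
Proof.
move=> h_gt0; rewrite /tail_count big1 // => s _.
by rewrite tuple0 /Xproc /= normr0 leNgt h_gt0.
Qed.

Lemma tail_countS t h : 0 < eps -> 2^-1 + eps <= h ->
  (tail_count t.+1 h <=
   tail_count t (h + eps - 2^-1) + tail_count t (h + eps + 2^-1))%N.
Proof.
move=> eps_gt0 h_ge; rewrite /tail_count big_tuple_rcons -big_split /=.
apply: leq_sum => s _; rewrite big_bool /= !Xproc_rcons.
exact: tail_step_le.
Qed.

Lemma tail_count_le_small t h : eps * h <= 2^-1 ->
  (tail_count t h)%:R <= 2 ^+ t * expR (2^-1 - eps * h).
Proof.
move=> small; apply: (@le_trans _ _ (2 ^+ t)).
  by rewrite -natrX ler_nat tail_count_le_pow.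
by rewrite ler_peMr ?exprn_ge0 //; apply: le_trans (expR_ge1Dx _); lra.
Qed.

Lemma expR_drift_le h :
  expR (2^-1 - eps * (h + eps - 2^-1)) + expR (2^-1 - eps * (h + eps + 2^-1))
  <= 2 * expR (2^-1 - eps * h).
Proof.
have split_exp d : expR (2^-1 - eps * (h + eps + d)) =
    expR (2^-1 - eps * h) * (expR (- (eps * d)) / expR (eps ^+ 2)).
  by rewrite -expRN -!expRD; congr expR; ring.
rewrite !split_exp -mulrDr.
rewrite mulrC ler_pM2r ?expR_gt0 // -mulrDl ler_pdivrMr ?expR_gt0 //.
rewrite mulrN opprK (_ : eps ^+ 2 = 4 * (eps / 2) ^+ 2); last by field.
exact: expR_plus_expRN_le.
Qed.

Lemma tail_count_le t h : 0 < eps -> eps <= 2^-1 ->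
  (tail_count t h)%:R <= 2 ^+ t * expR (2^-1 - eps * h).
Proof.
move=> eps_gt0 eps_le_half.
elim: t h => [|t IH] h; have [small|big] := lerP (eps * h) 2^-1;
  try exact: tail_count_le_small.
  by rewrite tail_count0 ?mulr_ge0 ?exprn_ge0 ?expR_ge0 //; nra.
have h_ge : 2^-1 + eps <= h by nra.
apply: le_trans (_ : (tail_count t (h + eps - 2^-1)
                      + tail_count t (h + eps + 2^-1))%:R <= _).
  by rewrite ler_nat tail_countS.
rewrite natrD; apply: le_trans (lerD (IH _) (IH _)) _.
rewrite -mulrDr exprSr -mulrA.
by apply: ler_wpM2l; [exact: exprn_ge0 | exact: expR_drift_le].
Qed.

End Process.

Theorem lemma7 (R : realType) (eps : R) (heps0 : 0 < eps) (heps1 : eps <= 2^-1)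
  (t : nat) (Delta : R) (hDelta : 0 <= Delta) :
  prob_absX_ge eps t Delta <= expR (2^-1) * expR (- (eps * Delta)).
Proof.
rewrite /prob_absX_ge card_tail_set card_tuple card_bool natrX.
rewrite ler_pdivrMr ?exprn_gt0 // -expRD mulrC.
exact: tail_count_le.
Qed.
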